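(* Consider a POMDP with finite state space $\mathcal S$, finite action space $\mathcal A$, finite observation space $\mathcal Y$, initial state $S_1\sim\rho$ and dynamics $\Pr(S_{t+1},Y_{t+1}\mid S_{1:t},Y_{1:t},A_{1:t})=P(S_{t+1},Y_{t+1}\mid S_t,A_t)$. Let $Z_t\in\mathcal Z$ be an agent state generated recursively by $Z_{t+1}=\phi(Z_t,Y_{t+1},A_t)$ from a fixed initial value, and let actions be chosen by an arbitrary agent-state based behavior policy $\mu=(\mu_1,\mu_2,\dots)$, i.e. $A_t\sim\mu_t(\cdot\mid Z_t)$. Then the process $\{(S_t,Z_t)\}_{t\ge1}$ is a Markov chain, and consequently the processes $\{(S_t,Z_t,A_t)\}_{t\ge1}$ and $\{(S_t,Y_t,Z_t,A_t)\}_{t\ge1}$ are also Markov chains.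
   Context: Markov chains here are allowed to be time-inhomogeneous. *)

From HB Require Import structures.
From mathcomp Require Import all_boot all_order all_algebra.
Set Implicit Arguments. Unset Strict Implicit. Unset Printing Implicit Defensive.
Import Order.TTheory GRing.Theory Num.Theory.
Local Open Scope ring_scope.

Section POMDP.
Variables (R : realFieldType) (S A Y Z : finType).
(* rho : joint law of (S_1, Y_1); P s a : law of (S_{t+1}, Y_{t+1}) given
   S_t = s, A_t = a; mu t z : law of A_t given Z_t = z (time index t from 0);
   phi : agent-state update Z_{t+1} = phi Z_t Y_{t+1} A_t; z0 : Z_1. *)
Variables (rho : {ffun S * Y -> R}) (P : S -> A -> {ffun S * Y -> R})
          (mu : nat -> Z -> {ffun A -> R}) (phi : Z -> Y -> A -> Z) (z0 : Z).

Definition is_distr (T : finType) (p : {ffun T -> R}) : Prop :=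
  (forall x, 0 <= p x) /\ \sum_x p x = 1.

(* Probability weight of the tail of a sampled trajectory (s_t, y_t, a_t)
   given the previous triple [prev] and the previous agent state [z]. *)
Fixpoint wrest (t : nat) (z : Z) (prev : S * Y * A) (l : seq (S * Y * A)) : R :=
  match l with
  | [::] => 1
  | (s, y, a) :: l' =>
      let z' := phi z y prev.2 in
      P prev.1.1 prev.2 (s, y) * mu t z' a * wrest t.+1 z' (s, y, a) l'
  end.

Definition weight (l : seq (S * Y * A)) : R :=
  match l with
  | [::] => 1
  | (s, y, a) :: l' => rho (s, y) * mu 0 z0 a * wrest 1 z0 (s, y, a) l'
  end.

Fixpoint full_rest (z : Z) (prev_a : A) (l : seq (S * Y * A)) : seq (S * Y * Z * A) :=
  match l with
  | [::] => [::]
  | (s, y, a) :: l' => let z' := phi z y prev_a in (s, y, z', a) :: full_rest z' a l'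
  end.

Definition full (l : seq (S * Y * A)) : seq (S * Y * Z * A) :=
  match l with
  | [::] => [::]
  | (s, y, a) :: l' => (s, y, z0, a) :: full_rest z0 a l'
  end.

Definition Pr (N : nat) (E : pred (seq (S * Y * Z * A))) : R :=
  \sum_(w : N.-tuple (S * Y * A) | E (full w)) weight w.

(* The process X_t = g (S_t, Y_t, Z_t, A_t) is a (possibly time-inhomogeneous)
   Markov chain: under the law of every finite horizon N, for every time n
   with n+1 < N, conditioning X_{n+1} on the whole past X_0..X_n (of positive
   probability) equals conditioning on X_n alone. *)
Definition markov_chain (T : eqType) (g : S * Y * Z * A -> T) : Prop :=
  forall (N n : nat) (xs : seq T) (x x' : T),
    (n.+1 < N)%N -> size xs = n ->
    let X := fun w : seq (S * Y * Z * A) => map g w in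
    let past := rcons xs x in
    0 < Pr N (fun w => take n.+1 (X w) == past) ->
    Pr N (fun w => take n.+2 (X w) == rcons past x')
      / Pr N (fun w => take n.+1 (X w) == past)
    = Pr N (fun w => drop n (take n.+2 (X w)) == [:: x; x'])
      / Pr N (fun w => drop n (take n.+1 (X w)) == [:: x]).

End POMDP.

From HB Require Import structures.
From mathcomp Require Import all_boot all_order all_algebra.
Set Implicit Arguments. Unset Strict Implicit. Unset Printing Implicit Defensive.
Import Order.TTheory GRing.Theory Num.Theory.
Local Open Scope ring_scope.

(* Appending a step (s, y, a) to a sampled prefix multiplies its probability
   by P(s, y | s', a') mu_t(a | z), where (s', a') are the previous state and
   action and the new agent state z = phi(z', y, a') is determined by y and the
   previous agent state and action.  Hence, given any past, the joint mass of two
   consecutive values x, x' of the process factors as (mass of x) * K_t(x, x'),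
   where K_t only reads the (S, Z, A)-components of x; so every function of the
   process that determines (S_t, Z_t, A_t) is a Markov chain.  For (S_t, Z_t),
   A_t can be summed out of K_t because its law mu_t(. | Z_t) depends on Z_t
   alone. *)

Lemma big_tuple_rcons (V : nmodType) (T : finType) n (F : seq T -> V) :
  \sum_(w : n.+1.-tuple T) F w = \sum_(w : n.-tuple T) \sum_(x : T) F (rcons w x).
Proof.
rewrite pair_bigA /=.
have take_tupleP (w : n.+1.-tuple T) : size (take n w) == n.
  by rewrite size_take size_tuple ltnSn.
rewrite (reindex (fun p : n.-tuple T * T => rcons_tuple p.1 p.2)) //=.
exists (fun w : n.+1.-tuple T => (Tuple (take_tupleP w), tnth w ord_max)).
  move=> [t x] _ /=; congr pair.
    by apply: val_inj => /=; rewrite -cats1 take_size_cat // size_tuple.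
  by rewrite (tnth_nth x) /= nth_rcons size_tuple ltnn eqxx.
move=> w _; apply: val_inj => /=.
rewrite (tnth_nth (tnth w ord_max)) /= -take_nth ?size_tuple //.
by rewrite take_oversize // size_tuple.
Qed.

Lemma sum_pair (V : nmodType) (I J : finType) (F : I * J -> V) :
  \sum_p F p = \sum_i \sum_j F (i, j).
Proof. by rewrite pair_bigA; apply: eq_bigr => -[]. Qed.

Lemma eq_take_cat (T : eqType) m k (s p q : seq T) :
  size p = m -> (m <= size s)%N ->
  (take (k + m) s == p ++ q) = (take m s == p) && (drop m (take (k + m) s) == q).
Proof.
move=> size_p le_ms.
rewrite -{1}(cat_take_drop m (take _ s)) take_takel ?leq_addl // eqseq_cat //.
by rewrite size_takel.
Qed.

Section POMDP.
Variables (R : realFieldType) (S A Y Z : finType).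
Variables (rho : {ffun S * Y -> R}) (P : S -> A -> {ffun S * Y -> R})
          (mu : nat -> Z -> {ffun A -> R}) (phi : Z -> Y -> A -> Z) (z0 : Z).
Hypotheses (rho_distr : is_distr rho) (P_distr : forall s a, is_distr (P s a))
           (mu_distr : forall t z, is_distr (mu t z)).

Local Notation weight := (weight rho P mu phi z0).
Local Notation full := (@full S A Y Z phi z0).
Local Notation Pr := (Pr rho P mu phi z0).
Local Notation markov_chain := (markov_chain rho P mu phi z0).

Fixpoint agent_after (z : Z) (pa : A) (u : seq (S * Y * A)) (y : Y) : Z :=
  if u is (_, y0, a0) :: u' then agent_after (phi z y0 pa) a0 u' y else phi z y pa.

Definition next_agent (u : seq (S * Y * A)) (y : Y) : Z :=
  if u is (_, _, a0) :: u' then agent_after z0 a0 u' y else z0.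

Definition next_law (u : seq (S * Y * A)) : {ffun S * Y -> R} :=
  if u is e :: u' then P (last e u').1.1 (last e u').2 else rho.

Definition extend (u : seq (S * Y * A)) (e : S * Y * A) : S * Y * Z * A :=
  (e.1.1, e.1.2, next_agent u e.1.2, e.2).

Lemma agent_after_rcons z pa u e y :
  agent_after z pa (rcons u e) y = phi (agent_after z pa u e.1.2) y e.2.
Proof. by case: e => [[s y'] a]; elim: u z pa => [|[[s0 y0] a0] u IH] z pa //=. Qed.

Lemma next_agent_rcons u e y : next_agent (rcons u e) y = phi (next_agent u e.1.2) y e.2.
Proof. by case: u => [|[[s0 y0] a0] u] /=; [case: e => [[]] | rewrite agent_after_rcons]. Qed.

Lemma next_law_rcons u e : next_law (rcons u e) = P e.1.1 e.2.
Proof. by case: u => [|e0 u] //=; rewrite last_rcons. Qed.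

Lemma full_rest_rcons z pa u e :
  full_rest phi z pa (rcons u e) =
  rcons (full_rest phi z pa u) (e.1.1, e.1.2, agent_after z pa u e.1.2, e.2).
Proof.
by elim: u z pa => [|[[s0 y0] a0] u IH] z pa /=; [case: e => [[]] | rewrite IH].
Qed.

Lemma full_rcons u e : full (rcons u e) = rcons (full u) (extend u e).
Proof.
case: u => [|[[s0 y0] a0] u] /=; first by case: e => [[]].
by rewrite full_rest_rcons.
Qed.

Lemma size_full u : size (full u) = size u.
Proof. by elim/last_ind: u => [|u e IH] //; rewrite full_rcons !size_rcons IH. Qed.

Lemma wrest_rcons t z pr u e :
  wrest P mu phi t z pr (rcons u e) = wrest P mu phi t z pr u *
    P (last pr u).1.1 (last pr u).2 e.1 * mu (t + size u) (agent_after z pr.2 u e.1.2) e.2.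
Proof.
elim: u t z pr => [|[[s1 y1] a1] u IH] t z pr /=.
  by case: e => [[s y] a]; rewrite addn0 !mul1r mulr1.
by rewrite IH addSnnS !mulrA.
Qed.

Lemma weight_rcons u e :
  weight (rcons u e) = weight u * next_law u e.1 * mu (size u) (next_agent u e.1.2) e.2.
Proof.
case: u => [|[[s0 y0] a0] u] /=; first by case: e => [[s y] a]; rewrite mul1r mulr1.
by rewrite wrest_rcons !mulrA add1n.
Qed.

Lemma next_law_distr u : is_distr (next_law u).
Proof. by case: u => [|e u] /=. Qed.

Lemma weight_ge0 u : 0 <= weight u.
Proof.
elim/last_ind: u => [|u e IH]; first exact: ler01.
by rewrite weight_rcons !mulr_ge0 // ?(next_law_distr u).1 ?(mu_distr _ _).1.
Qed.

Lemma sum_weight_rcons u : \sum_e weight (rcons u e) = weight u.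
Proof.
rewrite sum_pair.
under eq_bigr do under eq_bigr do rewrite weight_rcons /=.
under eq_bigr do rewrite -mulr_sumr (mu_distr _ _).2 mulr1.
by rewrite -mulr_sumr (next_law_distr u).2 mulr1.
Qed.

Lemma Pr_rcons N E :
  Pr N.+1 E = \sum_(u : N.-tuple _) \sum_e
    (if E (rcons (full u) (extend u e)) then weight (rcons u e) else 0).
Proof.
rewrite /Pr big_mkcond (@big_tuple_rcons _ _ N (fun w => if E (full w) then weight w else 0)).
by under eq_bigr do under eq_bigr do rewrite full_rcons.
Qed.

Lemma Pr_rcons2 N E :
  Pr N.+2 E = \sum_(u : N.-tuple _) \sum_e1 \sum_e2
    (if E (rcons (rcons (full u) (extend u e1)) (extend (rcons u e1) e2))
     then weight (rcons (rcons u e1) e2) else 0).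
Proof.
rewrite /Pr big_mkcond.
rewrite (@big_tuple_rcons _ _ N.+1 (fun w => if E (full w) then weight w else 0)).
rewrite (@big_tuple_rcons _ _ N
  (fun w => \sum_e if E (full (rcons w e)) then weight (rcons w e) else 0)).
by under eq_bigr do under eq_bigr do under eq_bigr do rewrite !full_rcons.
Qed.

Lemma le_Pr N (E E' : pred (seq (S * Y * Z * A))) :
  (forall l, E l -> E' l) -> Pr N E <= Pr N E'.
Proof.
move=> sub_EE'; rewrite /Pr [leLHS]big_mkcond [leRHS]big_mkcond ler_sum // => w _.
case: ifP => [/sub_EE' -> // | _]; case: ifP => // _; exact: weight_ge0.
Qed.

Lemma eq_Pr N (E E' : pred (seq (S * Y * Z * A))) :
  (forall l, size l = N -> E l = E' l) -> Pr N E = Pr N E'.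
Proof. by move=> EE'; apply: eq_bigl => w; rewrite EE' // size_full size_tuple. Qed.

Lemma Pr_take m N (E : pred (seq (S * Y * Z * A))) :
  (m <= N)%N -> (forall l, E l = E (take m l)) -> Pr N E = Pr m E.
Proof.
move=> /subnKC <-; move: (N - m)%N => k E_take.
elim: k => [|k IH]; first by rewrite addn0.
rewrite addnS Pr_rcons -IH /Pr [RHS]big_mkcond; apply: eq_bigr => u _.
have E_last e : E (rcons (full u) (extend u e)) = E (full u).
  by rewrite E_take [in RHS]E_take -cats1 takel_cat // size_full size_tuple leq_addr.
under eq_bigr do rewrite E_last.
by case: (E (full u)); [exact: sum_weight_rcons | rewrite big1].
Qed.

Section Lumping.
Variables (T : eqType) (g : S * Y * Z * A -> T).

Definition step_mass u x : R :=
  \sum_e (if g (extend u e) == x then weight (rcons u e) else 0).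

Definition two_step_mass u x x' : R :=
  \sum_e1 \sum_e2 (if (g (extend u e1) == x) && (g (extend (rcons u e1) e2) == x')
                   then weight (rcons (rcons u e1) e2) else 0).

Lemma Pr_one_step n (c : pred (seq T)) x :
  Pr n.+1 (fun w => c (take n (map g w)) && (drop n (map g w) == [:: x])) =
  \sum_(u : n.-tuple _) (if c (map g (full u)) then step_mass u x else 0).
Proof.
rewrite Pr_rcons; apply: eq_bigr => u _.
have size_u : size (map g (full u)) = n by rewrite size_map size_full size_tuple.
under eq_bigr do rewrite map_rcons -cats1 take_size_cat // drop_size_cat //.
by case: (c _) => /=; [apply: eq_bigr => e _; rewrite eqseq_cons andbT | rewrite big1].
Qed.

Lemma Pr_two_steps n (c : pred (seq T)) x x' :
  Pr n.+2 (fun w => c (take n (map g w)) && (drop n (map g w) == [:: x; x'])) =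
  \sum_(u : n.-tuple _) (if c (map g (full u)) then two_step_mass u x x' else 0).
Proof.
rewrite Pr_rcons2; apply: eq_bigr => u _.
have size_u : size (map g (full u)) = n by rewrite size_map size_full size_tuple.
have map_g_rcons2 e1 e2 :
    map g (rcons (rcons (full u) (extend u e1)) (extend (rcons u e1) e2)) =
    map g (full u) ++ [:: g (extend u e1); g (extend (rcons u e1) e2)].
  by rewrite !map_rcons -!cats1 -catA.
under eq_bigr do under eq_bigr do
  rewrite map_g_rcons2 take_size_cat // drop_size_cat //.
case: (c _) => /=; last by rewrite big1 // => e1 _; rewrite big1.
by apply: eq_bigr => e1 _; apply: eq_bigr => e2 _; rewrite !eqseq_cons andbT.
Qed.

Section TwoStepFactor.
Variable Q : nat -> T -> T -> R.
Hypothesis two_step_mass_factor :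
  forall u x x', two_step_mass u x x' = Q (size u) x x' * step_mass u x.

Lemma Pr_next_factor N n (c : pred (seq T)) x x' : (n.+1 < N)%N ->
  Pr N (fun w => c (take n (map g w)) && (drop n (take n.+2 (map g w)) == [:: x; x'])) =
  Q n x x' * Pr N (fun w => c (take n (map g w)) && (drop n (take n.+1 (map g w)) == [:: x])).
Proof.
move=> ltnN.
have take_map_take i j l : (i <= j)%N -> take i (map g (take j l)) = take i (map g l).
  by move=> le_ij; rewrite map_take take_takel.
rewrite (@Pr_take n.+2 N _ ltnN); last first.
  by move=> l; rewrite !take_map_take ?ltnSn ?(leqW (leqnSn n)).
rewrite [in RHS](@Pr_take n.+1 N _ (ltnW ltnN)); last first.
  by move=> l; rewrite !take_map_take ?ltnSn ?leqnSn.
rewrite (eq_Pr (E' := fun w =>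
  c (take n (map g w)) && (drop n (map g w) == [:: x; x']))).
  rewrite (eq_Pr (N := n.+1) (E' := fun w =>
    c (take n (map g w)) && (drop n (map g w) == [:: x]))).
    rewrite Pr_two_steps Pr_one_step mulr_sumr; apply: eq_bigr => u _.
    by case: (c _); rewrite ?mulr0 // two_step_mass_factor size_tuple.
  by move=> l size_l; rewrite [take n.+1 _]take_oversize // size_map size_l.
by move=> l size_l; rewrite [take n.+2 _]take_oversize // size_map size_l.
Qed.

Lemma markov_chain_of_two_step_factor : markov_chain g.
Proof.
move=> N n xs x x' ltnN size_xs /= past_gt0.
have split_past k q : (k + n <= N)%N ->
    Pr N (fun w => take (k + n) (map g w) == xs ++ q) =
    Pr N (fun w => (take n (map g w) == xs) && (drop n (take (k + n) (map g w)) == q)).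
  move=> le_kN; apply: eq_Pr => l size_l.
  by rewrite eq_take_cat // size_map size_l (leq_trans (leq_addl k n)).
have present_gt0 :
    0 < Pr N (fun w => drop n (take n.+1 (map g w)) == [:: x]).
  apply: (lt_le_trans past_gt0); apply: le_Pr => l /eqP past_l.
  by rewrite past_l -cats1 drop_size_cat.
have past_factor :
    Pr N (fun w => take n.+2 (map g w) == rcons (rcons xs x) x') =
    Q n x x' * Pr N (fun w => take n.+1 (map g w) == rcons xs x).
  rewrite -!cats1 -catA (split_past 2%N _ ltnN) (split_past 1%N _ (ltnW ltnN)).
  exact: (Pr_next_factor (pred1 xs) x x' ltnN).
rewrite past_factor (Pr_next_factor xpredT) //.
by rewrite !mulfK ?gt_eqF.
Qed.
End TwoStepFactor.

Definition transition_mass n s z a x' : R :=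
  \sum_e (if g (e.1.1, e.1.2, phi z e.1.2 a, e.2) == x'
          then P s a e.1 * mu n.+1 (phi z e.1.2 a) e.2 else 0).

Lemma two_step_massE u x x' : two_step_mass u x x' =
  \sum_e (if g (extend u e) == x
          then weight (rcons u e) * transition_mass (size u) e.1.1 (next_agent u e.1.2) e.2 x'
          else 0).
Proof.
apply: eq_bigr => e1 _; case: ifP => _ /=; last by rewrite big1.
rewrite /transition_mass mulr_sumr; apply: eq_bigr => e2 _.
rewrite /extend /= weight_rcons !next_agent_rcons next_law_rcons size_rcons.
by case: ifP; rewrite ?mulr0 ?mulrA.
Qed.

Lemma markov_chain_of_state_agent_action (h : T -> S * Z * A) :
  (forall v, h (g v) = (v.1.1.1, v.1.2, v.2)) -> markov_chain g.
Proof.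
move=> gK; apply: (@markov_chain_of_two_step_factor
  (fun n x x' => transition_mass n (h x).1.1 (h x).1.2 (h x).2 x')) => u x x'.
rewrite two_step_massE /step_mass mulr_sumr; apply: eq_bigr => e _.
by case: eqP => [<-|_]; rewrite ?mulr0 // gK mulrC.
Qed.

End Lumping.

Lemma markov_chain_state_agent : markov_chain (fun v : S * Y * Z * A => (v.1.1.1, v.1.2)).
Proof.
pose g (v : S * Y * Z * A) := (v.1.1.1, v.1.2).
apply: (@markov_chain_of_two_step_factor _ g
  (fun n x x' => \sum_a mu n x.2 a * transition_mass g n x.1 x.2 a x')) => u x x'.
rewrite two_step_massE /step_mass [LHS]sum_pair [in RHS]sum_pair mulr_sumr.
apply: eq_bigr => -[s y] _; rewrite /g /extend /=.
have [<-|_] /= := eqVneq (s, next_agent u y) x; last by rewrite !big1_eq mulr0.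
have sum_actions : \sum_a weight (rcons u (s, y, a)) = weight u * next_law u (s, y).
  by under eq_bigr do rewrite weight_rcons /=; rewrite -mulr_sumr (mu_distr _ _).2 mulr1.
under eq_bigr do rewrite weight_rcons /= -mulrA.
by rewrite sum_actions -mulr_sumr mulrC.
Qed.

Lemma markov_chain_state_agent_action :
  markov_chain (fun v : S * Y * Z * A => (v.1.1.1, v.1.2, v.2)).
Proof. exact: (markov_chain_of_state_agent_action (h := id)). Qed.

Lemma markov_chain_full : markov_chain (fun v : S * Y * Z * A => v).
Proof. exact: (markov_chain_of_state_agent_action (h := fun v => (v.1.1.1, v.1.2, v.2))). Qed.

End POMDP.

Theorem lemma1 (R : realFieldType) (S A Y Z : finType)
  (rho : {ffun S * Y -> R}) (P : S -> A -> {ffun S * Y -> R})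
  (mu : nat -> Z -> {ffun A -> R}) (phi : Z -> Y -> A -> Z) (z0 : Z) :
  is_distr rho ->
  (forall s a, is_distr (P s a)) ->
  (forall t z, is_distr (mu t z)) ->
  markov_chain rho P mu phi z0
    (fun x : S * Y * Z * A => (x.1.1.1, x.1.2)) /\
  markov_chain rho P mu phi z0
    (fun x : S * Y * Z * A => (x.1.1.1, x.1.2, x.2)) /\
  markov_chain rho P mu phi z0
    (fun x : S * Y * Z * A => x).
Proof.
move=> rho_distr P_distr mu_distr.
by split; [|split]; [apply: markov_chain_state_agent | apply: markov_chain_state_agent_action
  | apply: markov_chain_full].
Qed.
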